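(* Let $r\ge2$ be an integer. Let $E$ be the set of $\psi\in C_p(\mathbb{R})$ for which there exist constants $m>0$ and $\alpha\ge0$ with $2mr>\alpha$ such that $m\,d(x)\le\psi(x)$ for all $x\in[0,1]$ and $\Delta_{n,k}(y;\psi)\le\alpha$ for all $n\in\mathbb{N}_0$, $k\in\{0,1,\dots,r^n-1\}$, $y\in(0,1)$. Then $E$ contains (1) the set $SC_0$ of all $\psi\in C_p(\mathbb{R})$ that are concave on $[0,1]$ and satisfy $\psi>0$ on $(0,1)$, and (2) the set $\mathcal{P}$.
   Context: $C_p(\mathbb{R})$ denotes the set of all continuous functions $f:\mathbb{R}\to\mathbb{R}$ periodic with period $1$ with $f(0)=0$; $\mathbb{N}_0=\mathbb{N}\cup\{0\}$. $d(x)=\min\{|x-z|:z\in\mathbb{Z}\}$. For $f\in C_p(\mathbb{R})$ and $(n,k,y)\in\mathbb{N}_0\times\mathbb{Z}\times(0,1)$: $\delta^+_{n,k}(y;f)=\dfrac{f(\frac{k+1}{r^n})-f(\frac{k+y}{r^n})}{\frac{1-y}{r^n}}$, $\delta^-_{n,k}(y;f)=\dfrac{f(\frac{k+y}{r^n})-f(\frac{k}{r^n})}{\frac{y}{r^n}}$, $\Delta_{n,k}(y;f)=2r^n(\delta^+_{n,k}(y;f)-\delta^-_{n,k}(y;f))$. For $c>0$, $\mathcal{P}_c$ is the set of $f\in C_p(\mathbb{R})$ with $\delta^+_{n,k}(y;f)-\delta^-_{n,k}(y;f)\le-c$ for all $(n,k,y)\in\mathbb{N}_0\times\mathbb{Z}\times(0,1)$,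 and $\mathcal{P}=\bigcup_{c>0}\mathcal{P}_c$. *)

From Stdlib Require Import Reals Lra Lia.
Open Scope R_scope.

Definition Cp (f : R -> R) : Prop :=
  continuity f /\ (forall x, f (x + 1) = f x) /\ f 0 = 0.

(* d(x) = min{|x-z| : z in Z}, i.e. distance to the nearest integer.
   With fl := up x - 1 = floor x, this is min(x - fl, fl + 1 - x). *)
Definition dist_Z (x : R) : R :=
  Rmin (x - IZR (up x - 1)) (IZR (up x) - x).

Definition delta_plus (r : nat) (n : nat) (k : R) (y : R) (f : R -> R) : R :=
  (f ((k + 1) / INR r ^ n) - f ((k + y) / INR r ^ n)) / ((1 - y) / INR r ^ n).

Definition delta_minus (r : nat) (n : nat) (k : R) (y : R) (f : R -> R) : R :=
  (f ((k + y) / INR r ^ n) - f (k / INR r ^ n)) / (y / INR r ^ n).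

Definition Delta (r : nat) (n : nat) (k : R) (y : R) (f : R -> R) : R :=
  2 * INR r ^ n * (delta_plus r n k y f - delta_minus r n k y f).

Definition in_Pc (r : nat) (c : R) (f : R -> R) : Prop :=
  Cp f /\ forall (n : nat) (k : Z) (y : R), 0 < y < 1 ->
    delta_plus r n (IZR k) y f - delta_minus r n (IZR k) y f <= - c.

Definition in_P (r : nat) (f : R -> R) : Prop :=
  exists c, 0 < c /\ in_Pc r c f.

Definition in_E (r : nat) (psi : R -> R) : Prop :=
  Cp psi /\
  exists m alpha : R, 0 < m /\ 0 <= alpha /\ alpha < 2 * m * INR r /\
    (forall x, 0 <= x <= 1 -> m * dist_Z x <= psi x) /\
    (forall (n k : nat) (y : R), (k < r ^ n)%nat -> 0 < y < 1 ->
       Delta r n (INR k) y psi <= alpha).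

Definition concave_on_01 (f : R -> R) : Prop :=
  forall x y t, 0 <= x <= 1 -> 0 <= y <= 1 -> 0 <= t <= 1 ->
    t * f x + (1 - t) * f y <= f (t * x + (1 - t) * y).

Definition in_SC0 (psi : R -> R) : Prop :=
  Cp psi /\ concave_on_01 psi /\ (forall x, 0 < x < 1 -> 0 < psi x).

From Pilot Require Import Defs.
From Stdlib Require Import Reals Lra Lia.
Open Scope R_scope.

(* In both cases one can take alpha = 0.  Concavity makes every second
   difference delta_plus - delta_minus nonpositive, and for f in P_c it is at
   most -c by definition.  For the lower bound, a concave function vanishing
   at 0 and 1 lies above the tent 2 f(1/2) d(x), while the level-0 second
   differences of f in P_c give f(x) >= c x (1 - x) >= (c/2) d(x). *)

Lemma Cp_one f : Cp f -> f 1 = 0.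
Proof.
  intros [_ [Hper H0]]. rewrite <- H0, <- (Hper 0). f_equal. ring.
Qed.

Lemma dist_Z_le_sub_l x z : IZR z <= x -> dist_Z x <= x - IZR z.
Proof.
  intros Hz. unfold dist_Z. destruct (archimed x) as [Hup _].
  assert (Hlt : (z < up x)%Z) by (apply lt_IZR; lra).
  assert (Hle : IZR z <= IZR (up x - 1)) by (apply IZR_le; lia).
  eapply Rle_trans; [apply Rmin_l | lra].
Qed.

Lemma dist_Z_le_sub_r x z : x <= IZR z -> dist_Z x <= IZR z - x.
Proof.
  intros Hz. unfold dist_Z. destruct (archimed x) as [_ Hup1].
  destruct (Z.le_gt_cases (up x) z) as [Hc | Hc].
  - apply IZR_le in Hc. eapply Rle_trans; [apply Rmin_r | lra].
  - assert (Hle : IZR z <= IZR (up x - 1)) by (apply IZR_le; lia).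
    rewrite minus_IZR in *. eapply Rle_trans; [apply Rmin_l | simpl in *; lra].
Qed.

Lemma dist_Z_le_01 x : 0 <= x <= 1 -> dist_Z x <= x /\ dist_Z x <= 1 - x.
Proof.
  intros Hx. split.
  - pose proof (dist_Z_le_sub_l x 0) as H. simpl in H. lra.
  - pose proof (dist_Z_le_sub_r x 1) as H. simpl in H. lra.
Qed.

Lemma half_dist_Z_le_parabola x : 0 <= x <= 1 -> dist_Z x / 2 <= x * (1 - x).
Proof.
  intros Hx. destruct (dist_Z_le_01 x Hx) as [Dl Dr].
  destruct (Rle_dec x (1/2)); nra.
Qed.

Lemma concave_ge_tent f x :
  concave_on_01 f -> f 0 = 0 -> f 1 = 0 -> 0 <= x <= 1 ->
  2 * f (1/2) * Rmin x (1 - x) <= f x.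
Proof.
  intros Hcv H0 H1 Hx. destruct (Rle_dec x (1/2)).
  - rewrite Rmin_left by lra.
    pose proof (Hcv (1/2) 0 (2 * x) ltac:(lra) ltac:(lra) ltac:(lra)) as C.
    replace (2 * x * (1/2) + (1 - 2 * x) * 0) with x in C by field.
    rewrite H0 in C. lra.
  - rewrite Rmin_right by lra.
    pose proof (Hcv (1/2) 1 (2 * (1 - x)) ltac:(lra) ltac:(lra) ltac:(lra)) as C.
    replace (2 * (1 - x) * (1/2) + (1 - 2 * (1 - x)) * 1) with x in C by field.
    rewrite H1 in C. lra.
Qed.

Lemma delta_diff_eq r n k y f :
  0 < y < 1 -> 0 < INR r ^ n ->
  delta_plus r n k y f - delta_minus r n k y f =
  INR r ^ n * (y * f ((k + 1) / INR r ^ n) + (1 - y) * f (k / INR r ^ n)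
               - f ((k + y) / INR r ^ n)) / (y * (1 - y)).
Proof.
  intros Hy Hh. unfold delta_plus, delta_minus. field. repeat split; lra.
Qed.

Lemma grid_point_in_01 (h j : R) : 0 < h -> 0 <= j <= h -> 0 <= j / h <= 1.
Proof.
  intros Hh Hj. split.
  - apply Rle_mult_inv_pos; lra.
  - apply Rmult_le_reg_r with h; [exact Hh |].
    unfold Rdiv. rewrite Rmult_assoc, Rinv_l; lra.
Qed.

Lemma delta_diff_nonpos_of_concave r n k y f :
  concave_on_01 f -> (k < r ^ n)%nat -> 0 < y < 1 ->
  delta_plus r n (INR k) y f - delta_minus r n (INR k) y f <= 0.
Proof.
  intros Hcv Hk Hy.
  assert (Hkh : INR k + 1 <= INR r ^ n)
    by (rewrite <- pow_INR, <- S_INR; apply le_INR; lia).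
  pose proof (pos_INR k) as Hk0.
  set (h := INR r ^ n) in *.
  assert (Hh : 0 < h) by lra.
  rewrite delta_diff_eq by assumption. fold h.
  pose proof (Hcv (INR k / h) ((INR k + 1) / h) (1 - y)
                (grid_point_in_01 h (INR k) Hh ltac:(lra))
                (grid_point_in_01 h (INR k + 1) Hh ltac:(lra)) ltac:(lra)) as C.
  replace ((1 - y) * (INR k / h) + (1 - (1 - y)) * ((INR k + 1) / h))
    with ((INR k + y) / h) in C by (field; lra).
  assert (Hnum : h * (y * f ((INR k + 1) / h) + (1 - y) * f (INR k / h)
                     - f ((INR k + y) / h)) <= 0) by nra.
  pose proof (Rinv_0_lt_compat (y * (1 - y)) ltac:(nra)).
  unfold Rdiv at 1. nra.
Qed.

Lemma in_Pc_ge_parabola r c f x :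
  in_Pc r c f -> 0 <= x <= 1 -> c * (x * (1 - x)) <= f x.
Proof.
  intros [Hf HP] Hx.
  assert (H0 : f 0 = 0) by apply Hf.
  pose proof (Cp_one f Hf) as H1.
  destruct (Req_dec x 0) as [-> | Nx0]; [rewrite H0; lra |].
  destruct (Req_dec x 1) as [-> | Nx1]; [rewrite H1; lra |].
  assert (Hx' : 0 < x < 1) by lra.
  assert (Hlevel0 : delta_plus r 0 (IZR 0) x f - delta_minus r 0 (IZR 0) x f
                    = - (f x / (x * (1 - x)))).
  { unfold delta_plus, delta_minus. simpl.
    rewrite !Rdiv_1_r, !Rplus_0_l, H0, H1. field. lra. }
  pose proof (HP 0%nat 0%Z x Hx') as H. rewrite Hlevel0 in H.
  assert (Hpar : 0 < x * (1 - x)) by nra.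
  assert (Hfx : f x = f x / (x * (1 - x)) * (x * (1 - x))) by (field; lra).
  nra.
Qed.

Lemma in_E_intro r psi m :
  (1 <= r)%nat -> Cp psi -> 0 < m ->
  (forall x, 0 <= x <= 1 -> m * dist_Z x <= psi x) ->
  (forall n k y, (k < r ^ n)%nat -> 0 < y < 1 ->
     delta_plus r n (INR k) y psi - delta_minus r n (INR k) y psi <= 0) ->
  in_E r psi.
Proof.
  intros Hr Hpsi Hm Hlow Hdiff. split; [exact Hpsi |].
  assert (Hr1 : 1 <= INR r) by (apply (le_INR 1); exact Hr).
  exists m, 0. repeat split; try lra.
  - nra.
  - exact Hlow.
  - intros n k y Hk Hy. unfold Defs.Delta.
    pose proof (pow_le (INR r) n ltac:(lra)).
    pose proof (Hdiff n k y Hk Hy).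
    set (h := INR r ^ n) in *. nra.
Qed.

Lemma SC0_in_E r psi : (1 <= r)%nat -> in_SC0 psi -> in_E r psi.
Proof.
  intros Hr [Hpsi [Hcv Hpos]].
  assert (Hhalf : 0 < psi (1/2)) by (apply Hpos; lra).
  apply (in_E_intro r psi (2 * psi (1/2))); [exact Hr | exact Hpsi | lra | |].
  - intros x Hx. destruct (dist_Z_le_01 x Hx) as [Dl Dr].
    pose proof (concave_ge_tent psi x Hcv (proj2 (proj2 Hpsi)) (Cp_one psi Hpsi) Hx).
    assert (dist_Z x <= Rmin x (1 - x)) by (apply Rmin_glb; lra).
    nra.
  - intros n k y Hk Hy. exact (delta_diff_nonpos_of_concave r n k y psi Hcv Hk Hy).
Qed.

Lemma P_in_E r psi : (1 <= r)%nat -> in_P r psi -> in_E r psi.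
Proof.
  intros Hr [c [Hc HPc]].
  apply (in_E_intro r psi (c / 2)); [exact Hr | apply HPc | lra | |].
  - intros x Hx.
    pose proof (in_Pc_ge_parabola r c psi x HPc Hx).
    pose proof (half_dist_Z_le_parabola x Hx). nra.
  - intros n k y _ Hy.
    pose proof (proj2 HPc n (Z.of_nat k) y Hy) as H.
    rewrite <- INR_IZR_INZ in H. lra.
Qed.

Theorem proposition3p6 (r : nat) (hr : (2 <= r)%nat) :
  (forall psi : R -> R, in_SC0 psi -> in_E r psi) /\
  (forall psi : R -> R, in_P r psi -> in_E r psi).
Proof.
  split; intros psi Hpsi.
  - apply SC0_in_E; [lia | exact Hpsi].
  - apply P_in_E; [lia | exact Hpsi].
Qed.
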